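(* Let $n\ge 1$. For $i,j\in\{1,\dots,n\}$ let $L_i>0$, $\mu_i>0$, $\theta_i\ge 0$, $\lambda_i\ge 0$ and $\gamma_{ij}\ge 0$ be real numbers with $\gamma_{ii}=0$ and $\gamma_{ij}=\gamma_{ji}$ for all $i,j$. Let $A$ be the $n\times n$ matrix with entries $$A_{ii}=-\Big(\frac{\mu_i}{L_i}+\theta_i+\sum_{j=1}^n\frac{\gamma_{ij}}{L_i}\Big),\qquad A_{ij}=\frac{\gamma_{ij}}{L_j}\quad (i\neq j),$$ and let $b\in\mathbb{R}^n$ have entries $b_i=\mu_i-\lambda_i$. Then $A$ is invertible and the equilibrium point $y^*=-A^{-1}b$ of the linear system of differential equations $y'(t)=Ay(t)+b$ is a stable equilibrium point.
   Context: The system models the inventory levels $y_i(t)$ of $n$ warehouses in one echelon: $L_i$ is the maximum inventory level, $\mu_i$ the maximum supply rate, $\theta_i$ the deterioration percentage per unit time, $\lambda_i$ the demand rate of warehouse $i$, and $\gamma_{ij}$ the maximum lateral transshipment rate from warehouse $i$ to $j$. Componentwise, $y_i'=(\mu_i-\lambda_i)-\big(\mu_i/L_i+\theta_i+\sum_j\gamma_{ij}/L_i\big)y_i+\sum_j(\gamma_{ij}/L_j)y_j$. *)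

From HB Require Import structures.
From mathcomp Require Import all_boot all_order all_algebra.
From mathcomp Require Import all_classical all_reals all_analysis.
Set Implicit Arguments. Unset Strict Implicit. Unset Printing Implicit Defensive.
Import Order.TTheory GRing.Theory Num.Theory.
Import numFieldNormedType.Exports.
Local Open Scope classical_set_scope.
Local Open Scope ring_scope.

Definition supnorm (R : realType) (n : nat) (v : 'cV[R]_n) : R :=
  \big[Num.max/0]_(i < n) `|v i ord0|.

Definition is_solution (R : realType) (n : nat) (A : 'M[R]_n) (b : 'cV[R]_n)
  (y : R -> 'cV[R]_n) : Prop :=
  (forall i : 'I_n, (fun s => y s i ord0) x @[x --> 0^'+] --> y 0 i ord0) /\
  (forall t : R, 0 < t -> forall i : 'I_n,
     derivable (fun s => y s i ord0) t 1 /\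
     derive1 (fun s => y s i ord0) t = (A *m y t + b) i ord0).

Definition stable_equilibrium (R : realType) (n : nat) (A : 'M[R]_n)
  (b : 'cV[R]_n) (ys : 'cV[R]_n) : Prop :=
  A *m ys + b = 0 /\
  forall eps : R, 0 < eps -> exists2 delta : R, 0 < delta &
    forall y, is_solution A b y -> supnorm (y 0 - ys) < delta ->
      forall t : R, 0 <= t -> supnorm (y t - ys) < eps.

Definition inventory_matrix (R : realType) (n : nat)
  (L mu theta : 'I_n -> R) (gamma : 'I_n -> 'I_n -> R) : 'M[R]_n :=
  \matrix_(i, j) (if i == j then
                    - (mu i / L i + theta i + \sum_(k < n) gamma i k / L i)
                  else gamma i j / L j).

Definition inventory_vector (R : realType) (n : nat) (mu lambda : 'I_n -> R)
  : 'cV[R]_n := \col_i (mu i - lambda i).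

(* The weighted quadratic form [x^T A diag(L) x] is bounded by [- sum_i mu_i x_i^2]: the
   transshipment terms form a symmetric, diagonally dominated (graph-Laplacian) part,
   and the diagonal contributes [- mu_i - theta_i L_i].  Hence [A] has no nonzero left
   kernel vector, and [V(z) = sum_i z_i^2 / L_i] is a Lyapunov function: along a solution,
   with [z = y - y*], [V' = 2 x^T A diag(L) x <= 0] for [x_i = z_i / L_i].  Since
   [V] is comparable to the squared sup-norm, [y*] is stable. *)
Set Warnings "-notation-overridden,-ambiguous-paths,-notation-incompatible-prefix".
From HB Require Import structures.
From mathcomp Require Import all_boot all_order all_algebra.
From mathcomp Require Import all_classical all_reals all_analysis.
From mathcomp Require Import ring lra.
Import Order.TTheory GRing.Theory Num.Theory.
Import numFieldNormedType.Exports.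
Set Implicit Arguments. Unset Strict Implicit. Unset Printing Implicit Defensive.
Local Open Scope ring_scope.

Section QuadraticForm.
Variables (R : realFieldType) (n : nat).

Definition qform (A : 'M[R]_n) (L x : 'I_n -> R) : R :=
  \sum_i \sum_j x i * (A i j * L j * x j).

Lemma sum_symmetric_quad_le (g : 'I_n -> 'I_n -> R) (x : 'I_n -> R) :
  (forall i j, 0 <= g i j) -> (forall i j, g i j = g j i) ->
  \sum_i \sum_j g i j * x i * x j <= \sum_i (\sum_j g i j) * x i ^+ 2.
Proof.
move=> g_ge0 g_sym.
have swap : \sum_i \sum_j g i j * x j ^+ 2 = \sum_i \sum_j g i j * x i ^+ 2.
  by rewrite exchange_big; apply: eq_bigr => i _; apply: eq_bigr => j _; rewrite g_sym.
have amgm : 2 * (\sum_i \sum_j g i j * x i * x j) <=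
    \sum_i \sum_j g i j * x i ^+ 2 + \sum_i \sum_j g i j * x j ^+ 2.
  rewrite -big_split /= mulr_sumr; apply: ler_sum => i _.
  rewrite -big_split /= mulr_sumr; apply: ler_sum => j _.
  have := g_ge0 i j; have := sqr_ge0 (x i - x j); nra.
rewrite swap in amgm.
under [X in _ <= X]eq_bigr do rewrite mulr_suml.
lra.
Qed.

Lemma unitmx_qform (A : 'M[R]_n) (L mu : 'I_n -> R) :
  (forall i, 0 < mu i) -> (forall x, qform A L x <= - \sum_i mu i * x i ^+ 2) ->
  A \in unitmx.
Proof.
move=> mu_gt0 hQ; rewrite unitmxE unitfE; apply/negP => /det0P [v v_neq0 vA].
have term_ge0 i : 0 <= mu i * v ord0 i ^+ 2 by rewrite mulr_ge0 ?sqr_ge0 ?ltW.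
have Qv : qform A L (fun i => v ord0 i) = 0.
  rewrite /qform exchange_big big1 //= => j _.
  have : (v *m A) ord0 j = 0 by rewrite vA mxE.
  rewrite mxE => vAj.
  transitivity ((\sum_i v ord0 i * A i j) * (L j * v ord0 j)); last by rewrite vAj mul0r.
  by rewrite mulr_suml; apply: eq_bigr => i _; ring.
have sum0 : \sum_i mu i * v ord0 i ^+ 2 = 0.
  have := hQ (fun i => v ord0 i); rewrite Qv oppr_ge0 => sum_le0.
  by apply/eqP; rewrite eq_le sum_le0 sumr_ge0.
move/negP: v_neq0; apply; apply/eqP/matrixP => i j; rewrite ord1 !mxE.
have /eqP := @psumr_eq0P _ _ _ _ (fun i _ => term_ge0 i) sum0 j isT.
by rewrite mulf_eq0 (gt_eqF (mu_gt0 j)) sqrf_eq0 => /eqP.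
Qed.

End QuadraticForm.

Section InventoryMatrix.
Variables (R : realType) (n : nat) (L mu theta : 'I_n -> R) (gamma : 'I_n -> 'I_n -> R).
Hypotheses (hL : forall i, 0 < L i) (htheta : forall i, 0 <= theta i)
  (hgamma : forall i j, 0 <= gamma i j) (hgdiag : forall i, gamma i i = 0)
  (hgsym : forall i j, gamma i j = gamma j i).

Let A := inventory_matrix L mu theta gamma.

Lemma inventory_matrix_scale i j : A i j * L j =
  gamma i j - (i == j)%:R * (mu i + theta i * L i + \sum_k gamma i k).
Proof.
have L_neq0 k : L k != 0 by exact: lt0r_neq0.
rewrite /A /inventory_matrix mxE; case: eqP => [<-|_] /=.
  by rewrite hgdiag -mulr_suml mul1r; field.
by rewrite mul0r subr0; field.
Qed.

Lemma qform_inventory_le x : qform A L x <= - \sum_i mu i * x i ^+ 2.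
Proof.
pose c i := mu i + theta i * L i + \sum_k gamma i k.
have row_sum i : \sum_j x i * (A i j * L j * x j) =
    \sum_j gamma i j * x i * x j - c i * x i ^+ 2.
  rewrite (eq_bigr (fun j => gamma i j * x i * x j - (i == j)%:R * (c i * x i * x j)));
    last by move=> j _; rewrite inventory_matrix_scale -/(c i); ring.
  rewrite sumrB; congr (_ - _).
  rewrite (bigD1 i) //= eqxx big1 => [|j /negPf]; last first.
    by rewrite eq_sym => ->; rewrite mul0r.
  by rewrite mul1r addr0 expr2 mulrA.
rewrite /qform (eq_bigr _ (fun i _ => row_sum i)) sumrB.
have := sum_symmetric_quad_le x hgamma hgsym.
have : \sum_i mu i * x i ^+ 2 + \sum_i (\sum_j gamma i j) * x i ^+ 2 <=
    \sum_i c i * x i ^+ 2.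
  rewrite -big_split; apply: ler_sum => i _ /=.
  have := mulr_ge0 (mulr_ge0 (htheta i) (ltW (hL i))) (sqr_ge0 (x i)).
  rewrite /c; nra.
lra.
Qed.

End InventoryMatrix.

Section SupNorm.
Variables (R : realType) (n : nat).

Lemma le_supnorm (v : 'cV[R]_n) i : `|v i ord0| <= supnorm v.
Proof. by rewrite /supnorm (bigD1 i) //= le_max lexx. Qed.

Lemma supnorm_ge0 (v : 'cV[R]_n) : 0 <= supnorm v.
Proof. by rewrite /supnorm; elim/big_ind: _ => // x y x_ge0 _; rewrite le_max x_ge0. Qed.

Lemma supnorm_lt (v : 'cV[R]_n) e :
  0 < e -> (forall i, `|v i ord0| < e) -> supnorm v < e.
Proof. by move=> e_gt0 v_lt; apply: bigmax_lt. Qed.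

End SupNorm.

Definition lyap (R : realType) (n : nat) (L : 'I_n -> R) (z : 'cV[R]_n) : R :=
  \sum_i (L i)^-1 * z i ord0 ^+ 2.

Section LyapunovBounds.
Variables (R : realType) (n : nat) (L : 'I_n -> R).
Hypothesis hL : forall i, 0 < L i.

Lemma lyap_subE (z w : 'cV[R]_n) :
  lyap L (z - w) = \sum_i (L i)^-1 * (z i ord0 - w i ord0) ^+ 2.
Proof. by apply: eq_bigr => i _; rewrite !mxE. Qed.

Lemma lyap_le_supnorm (z : 'cV[R]_n) : lyap L z <= (\sum_i (L i)^-1) * supnorm z ^+ 2.
Proof.
rewrite /lyap mulr_suml; apply: ler_sum => i _.
apply: ler_wpM2l; first by rewrite invr_ge0 ltW.
rewrite -real_normK ?num_real //; apply: lerXn2r; rewrite ?nnegrE ?le_supnorm //.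
exact: le_trans (normr_ge0 _) (le_supnorm z i).
Qed.

Lemma sqr_le_lyap (z : 'cV[R]_n) i : z i ord0 ^+ 2 <= L i * lyap L z.
Proof.
rewrite /lyap (bigD1 i) //= mulrDr mulrA mulfV ?lt0r_neq0 // mul1r lerDl.
apply: mulr_ge0; first exact: ltW.
apply: sumr_ge0 => j _.
by rewrite mulr_ge0 ?invr_ge0 ?sqr_ge0 ?ltW.
Qed.

End LyapunovBounds.

Section LyapunovStability.
Variables (R : realType) (n : nat) (A : 'M[R]_n) (b ys : 'cV[R]_n) (L : 'I_n -> R).
Hypotheses (hL : forall i, 0 < L i) (heq : A *m ys + b = 0)
  (hQ : forall x, qform A L x <= 0).

Lemma derive1_solution y (t : R) i : is_solution A b y -> 0 < t ->
  derive1 (fun s => y s i ord0) t = (A *m (y t - ys)) i ord0.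
Proof.
move=> [_ y_der] t_gt0; rewrite (y_der t t_gt0 i).2.
suff -> : b = - (A *m ys) by rewrite mulmxBr.
by apply/eqP; rewrite -addr_eq0 addrC heq.
Qed.

Lemma lyap_solution_derive y (t : R) : is_solution A b y -> 0 < t ->
  is_derive t 1 (fun s => lyap L (y s - ys))
    (2 * qform A L (fun i => (y t - ys) i ord0 / L i)).
Proof.
move=> y_sol t_gt0.
have -> : (fun s => lyap L (y s - ys)) =
    \sum_i ((L i)^-1 \*: ((fun s => y s i ord0) - cst (ys i ord0)) ^+ 2).
  by apply/funext => s; rewrite fct_sumE lyap_subE.
apply: is_derive_eq.
  apply: is_derive_sum => i; apply: is_deriveZ; apply: is_deriveX; apply: is_deriveB.
  exact/derivableP/(y_sol.2 t t_gt0 i).1.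
rewrite /qform mulr_sumr; apply: eq_bigr => i _.
rewrite -derive1E derive1_solution // !mxE /= subr0 expr1 /GRing.scale /= !fctE.
rewrite !mulr_sumr; apply: eq_bigr => j _; rewrite !mxE.
by field; rewrite !lt0r_neq0.
Qed.

Lemma lyap_solution_nonincreasing y (t : R) : is_solution A b y -> 0 <= t ->
  lyap L (y t - ys) <= lyap L (y 0 - ys).
Proof.
move=> y_sol; rewrite le_eqVlt => /predU1P [<- //|t_gt0].
pose V s := lyap L (y s - ys).
have V_der x : 0 < x -> derivable V x 1.
  by move=> x_gt0; case: (lyap_solution_derive y_sol x_gt0).
have V_cont x : 0 < x -> {for x, continuous V}.
  by move=> x_gt0; apply/differentiable_continuous/derivable1_diffP/V_der.
apply: (@ler0_derive1_le_cc _ V 0 t) => //; rewrite ?in_itv /= ?lexx ?ltW //.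
- by move=> x; rewrite in_itv /= => /andP [x_gt0 _]; exact: V_der.
- move=> x; rewrite in_itv /= => /andP [x_gt0 _].
  case: (lyap_solution_derive y_sol x_gt0) => _ V'x.
  by rewrite derive1E V'x pmulr_rle0.
apply/continuous_within_itvP => //; split.
- by move=> x; rewrite in_itv /= => /andP [x_gt0 _]; exact: V_cont.
- rewrite /V; under eq_fun do rewrite lyap_subE; rewrite lyap_subE.
  apply: cvg_big => // [|i _]; first exact: add_continuous.
  apply: cvgM; first exact: cvg_cst.
  by rewrite expr2; apply: cvgM; apply: cvgB; [exact: y_sol.1 | exact: cvg_cst
    | exact: y_sol.1 | exact: cvg_cst].
- exact/cvg_at_left_filter/V_cont.
Qed.

Lemma stable_equilibrium_lyap : stable_equilibrium A b ys.
Proof.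
split=> // eps eps_gt0.
pose K := \sum_i (L i)^-1.
pose C := 1 + (\sum_i L i) * K.
have K_ge0 : 0 <= K by apply: sumr_ge0 => i _; rewrite invr_ge0 ltW.
have LK_lt i : L i * K < C.
  have Li_le : L i <= \sum_j L j.
    by rewrite (bigD1 i) //= lerDl; apply: sumr_ge0 => j _; exact: ltW.
  apply: le_lt_trans (ler_wpM2r K_ge0 Li_le) _.
  by rewrite /C -[X in X < _]add0r ltrD2r ltr01.
have C_ge1 : 1 <= C.
  rewrite /C lerDl mulr_ge0 //; apply: sumr_ge0 => j _; exact: ltW.
have C_gt0 : 0 < C := lt_le_trans ltr01 C_ge1.
exists (eps / C); first by rewrite divr_gt0.
move=> y y_sol y0_lt t t_ge0; apply: supnorm_lt => // i.
have zi_sqr : (y t - ys) i ord0 ^+ 2 <= L i * K * (eps / C) ^+ 2.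
  rewrite -mulrA; apply: le_trans (sqr_le_lyap hL _ i) _.
  apply: ler_wpM2l; first exact: ltW.
  apply: le_trans (lyap_solution_nonincreasing y_sol t_ge0) _.
  apply: le_trans (lyap_le_supnorm hL _) _; apply: ler_wpM2l => //.
  by apply: lerXn2r; rewrite ?nnegrE ?supnorm_ge0 ?divr_ge0 ?ltW.
have : L i * K * (eps / C) ^+ 2 < eps ^+ 2.
  have -> : eps ^+ 2 = C ^+ 2 * (eps / C) ^+ 2 by field; rewrite lt0r_neq0.
  rewrite ltr_pM2r ?exprn_gt0 ?divr_gt0 //.
  by apply: lt_le_trans (LK_lt i) _; rewrite expr2 ler_pMr.
move/(le_lt_trans zi_sqr); rewrite -real_normK ?num_real //.
by rewrite (@ltr_pXn2r _ 2) ?nnegrE ?normr_ge0 ?ltW.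
Qed.

End LyapunovStability.

Theorem proposition2 (R : realType) (n : nat) (hn : (0 < n)%N)
  (L mu theta lambda : 'I_n -> R) (gamma : 'I_n -> 'I_n -> R)
  (hL : forall i, 0 < L i) (hmu : forall i, 0 < mu i)
  (htheta : forall i, 0 <= theta i) (hlambda : forall i, 0 <= lambda i)
  (hgamma : forall i j, 0 <= gamma i j) (hgdiag : forall i, gamma i i = 0)
  (hgsym : forall i j, gamma i j = gamma j i) :
  let A := inventory_matrix L mu theta gamma in
  let b := inventory_vector mu lambda in
  A \in unitmx /\ stable_equilibrium A b (- (invmx A *m b)).
Proof.
move=> A b.
have A_qform x : qform A L x <= - \sum_i mu i * x i ^+ 2.
  exact: qform_inventory_le.
have A_unit : A \in unitmx by exact: unitmx_qform hmu A_qform.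
split=> //; apply: stable_equilibrium_lyap hL _ _.
  by rewrite mulmxN mulmxA mulmxV // mul1mx addNr.
move=> x; apply: le_trans (A_qform x) _; rewrite oppr_le0.
by apply: sumr_ge0 => i _; rewrite mulr_ge0 ?sqr_ge0 ?ltW.
Qed.
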